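(* Let $E$ be an arbitrary graph and consider the groupoid $\mathcal{G}_E$ with cocycle $\widetilde{w}:\mathcal{G}_E\to\mathbb{Z}$, $\widetilde{w}(x,k,y)=k$. Then $\widetilde{w}$ is star injective if and only if $|r_E^{-1}(v)|\le1$ for every $v\in E^0$ (i.e. every vertex receives at most one edge).
   Context: Graph $E=(E^0,E^1,r_E,s_E)$; paths, $E^*$ (finite paths, including vertices), $E^\infty$ (infinite paths); $|\alpha|$ is the length of a path. A vertex is regular if it emits a finite nonzero number of edges. $X=E^\infty\cup\{\mu\in E^*: r(\mu)\text{ is not regular}\}$. $\mathcal{G}_E=\{(\alpha x,|\alpha|-|\beta|,\beta x):\alpha,\beta\in E^*,\ x\in X,\ r(\alpha)=r(\beta)=s(x)\}$, with $(x,k,y)$ a morphism from $y$ (domain) to $x$ (range), composition $(x,k,y)(y,l,z)=(x,k+l,z)$, inverse $(x,k,y)^{-1}=(y,-k,x)$, and unit space identified with $X$. Viewing $\mathbb{Z}$ as a one-object category, a functor $F:\mathcal{C}\to\mathcal{D}$ is star injective if for each object $x$ its restriction to $\operatorname{Star}(x)=\{\text{morphisms with domain }x\}$ is injective; here $\operatorname{Star}(x)=\{(y,k,x)\in\mathcal{G}_E\}$. *)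

From Stdlib Require Import ZArith List.
Import ListNotations.
Open Scope Z_scope.

Section Graph.
Variables (E0 E1 : Type) (r s : E1 -> E0).

(* Finite paths: a start vertex v together with a list of edges e1 ... en
   with s e1 = v and r e_i = s e_{i+1}.  Length-0 paths are vertices. *)
Fixpoint fpath (v : E0) (l : list E1) : Prop :=
  match l with
  | [] => True
  | e :: l' => s e = v /\ fpath (r e) l'
  end.

Fixpoint frange (v : E0) (l : list E1) : E0 :=
  match l with
  | [] => v
  | e :: l' => frange (r e) l'
  end.

Definition ipath (f : nat -> E1) : Prop := forall n, r (f n) = s (f (S n)).

Definition regular (v : E0) : Prop :=
  (exists e, s e = v) /\ (exists L : list E1, forall e, s e = v -> In e L).

Inductive bpath : Type :=
  | Fin : E0 -> list E1 -> bpath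
  | Inf : (nat -> E1) -> bpath.

Definition in_X (x : bpath) : Prop :=
  match x with
  | Fin v l => fpath v l /\ ~ regular (frange v l)
  | Inf f => ipath f
  end.

Definition bsrc (x : bpath) : E0 :=
  match x with
  | Fin v _ => v
  | Inf f => s (f 0%nat)
  end.

Definition prepend (l : list E1) (f : nat -> E1) : nat -> E1 :=
  fun n => match nth_error l n with
           | Some e => e
           | None => f (n - length l)%nat
           end.

Definition bcat (v : E0) (l : list E1) (x : bpath) : bpath :=
  match x with
  | Fin _ m => Fin v (l ++ m)
  | Inf f => Inf (prepend l f)
  end.

Definition in_GE (g : bpath * Z * bpath) : Prop :=
  exists (va : E0) (a : list E1) (vb : E0) (b : list E1) (z : bpath),
    fpath va a /\ fpath vb b /\ in_X z /\
    frange va a = bsrc z /\ frange vb b = bsrc z /\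
    g = (bcat va a z, Z.of_nat (length a) - Z.of_nat (length b), bcat vb b z).

Definition GE_dom (g : bpath * Z * bpath) : bpath := snd g.

Definition wtilde (g : bpath * Z * bpath) : Z := snd (fst g).

End Graph.

(* Generic star injectivity of a functor F from a category (given by its
   set of morphisms, their domains) into Z viewed as a one-object category:
   for every object x, F restricted to Star(x) is injective. *)
Definition star_injective {Obj Mor : Type} (isObj : Obj -> Prop)
  (isMor : Mor -> Prop) (dom : Mor -> Obj) (F : Mor -> Z) : Prop :=
  forall x, isObj x ->
    forall g h, isMor g -> isMor h -> dom g = x -> dom h = x ->
      F g = F h -> g = h.

(* A morphism with domain y has the form (alpha z, |alpha| - |beta|, beta z) with beta z = y.
   Given two such decompositions, the one with the shorter beta has z = p z', where z' is the
   tail of the other, so both ranges are a finite path followed by the same z', and the two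
   finite paths end at s(z') and have the same length because the degrees agree.  If every
   vertex receives at most one edge, a finite path is determined by its range and length, so
   the two morphisms coincide.  Conversely, two edges e1, e2 into v give the morphisms
   (e1 x, 1, x) and (e2 x, 1, x) of Star(x) for any x in X starting at v. *)

From Pilot Require Import Defs.
From Stdlib Require Import ZArith List Lia Classical ClassicalEpsilon FunctionalExtensionality.
Import ListNotations.

Section BoundaryPaths.
Variables (E0 E1 : Type) (r s : E1 -> E0).

Local Notation fpath := (Defs.fpath E0 E1 r s).
Local Notation frange := (Defs.frange E0 E1 r).
Local Notation ipath := (Defs.ipath E0 E1 r s).
Local Notation regular := (Defs.regular E0 E1 s).
Local Notation bpath := (Defs.bpath E0 E1).
Local Notation in_X := (Defs.in_X E0 E1 r s).
Local Notation in_GE := (Defs.in_GE E0 E1 r s).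
Local Notation bsrc := (Defs.bsrc E0 E1 s).
Local Notation bcat := (Defs.bcat E0 E1).
Local Notation prepend := (Defs.prepend E1).

Lemma frange_app v a b : frange v (a ++ b) = frange (frange v a) b.
Proof. revert v; induction a; simpl; auto. Qed.

Lemma fpath_app v a b : fpath v (a ++ b) <-> fpath v a /\ fpath (frange v a) b.
Proof. revert v; induction a as [|e a IH]; intro v; simpl; [tauto|]. rewrite IH; tauto. Qed.

Lemma prepend_ge a f n : (length a <= n)%nat -> prepend a f n = f (n - length a)%nat.
Proof. intro H. unfold prepend. now rewrite (proj2 (nth_error_None a n) H). Qed.

Lemma bcat_app va a vp p x : bcat va a (bcat vp p x) = bcat va (a ++ p) x.
Proof.
  destruct x as [vx m | f]; simpl; [now rewrite app_assoc|].
  f_equal. apply functional_extensionality. intro n. unfold prepend.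
  destruct (Nat.lt_ge_cases n (length a)).
  - rewrite nth_error_app1 by lia.
    destruct (nth_error a n) eqn:E; [reflexivity|].
    apply nth_error_None in E; lia.
  - rewrite nth_error_app2, (proj2 (nth_error_None a n)) by lia.
    unfold prepend. destruct (nth_error p (n - length a)); auto.
    rewrite length_app. f_equal. lia.
Qed.

Lemma bcat_nil x : bcat (bsrc x) [] x = x.
Proof.
  destruct x as [vx m | f]; simpl; auto.
  f_equal. apply functional_extensionality. intro n. unfold prepend. destruct n; auto.
Qed.

Definition bdrop (n : nat) (x : bpath) : bpath :=
  match x with
  | Defs.Fin _ _ v l => Defs.Fin E0 E1 (frange v (firstn n l)) (skipn n l)
  | Defs.Inf _ _ f => Defs.Inf E0 E1 (fun m => f (m + n)%nat)
  end.

Definition btake (n : nat) (x : bpath) : list E1 :=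
  match x with
  | Defs.Fin _ _ _ l => firstn n l
  | Defs.Inf _ _ f => map f (seq 0 n)
  end.

Definition bvalid (x : bpath) : Prop :=
  match x with
  | Defs.Fin _ _ v l => fpath v l
  | Defs.Inf _ _ f => ipath f
  end.

Lemma in_X_bvalid x : in_X x -> bvalid x.
Proof. destruct x; simpl; tauto. Qed.

Lemma bdrop0 x : bdrop 0 x = x.
Proof.
  destruct x; simpl; auto.
  f_equal. apply functional_extensionality. intro. f_equal. lia.
Qed.

Lemma bdrop_bcat vb b x n :
  frange vb b = bsrc x -> bdrop (length b + n) (bcat vb b x) = bdrop n x.
Proof.
  destruct x as [vx m | f]; simpl; intro H.
  - rewrite firstn_app, skipn_app, firstn_all2, skipn_all2 by lia.
    replace (length b + n - length b)%nat with n by lia.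
    now rewrite frange_app, H.
  - f_equal. apply functional_extensionality. intro k.
    rewrite prepend_ge by lia. f_equal. lia.
Qed.

Lemma bcat_btake_bdrop n x : bcat (bsrc x) (btake n x) (bdrop n x) = x.
Proof.
  destruct x as [vx m | f]; simpl; [now rewrite firstn_skipn|].
  f_equal. apply functional_extensionality. intro k. unfold prepend.
  rewrite nth_error_map, length_map, length_seq.
  destruct (Nat.lt_ge_cases k n).
  - rewrite nth_error_seq. destruct (Nat.ltb_spec k n); [reflexivity|lia].
  - rewrite (proj2 (nth_error_None (seq 0 n) k)) by (rewrite length_seq; lia).
    simpl. f_equal. lia.
Qed.

Lemma ipath_seq f : ipath f -> forall k j,
  fpath (s (f j)) (map f (seq j k)) /\ frange (s (f j)) (map f (seq j k)) = s (f (k + j)%nat).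
Proof.
  intros Hf k; induction k as [|k IH]; intro j; simpl; auto.
  destruct (IH (S j)) as [P R]. rewrite Hf, <- Nat.add_succ_r. auto.
Qed.

Lemma btake_fpath n x : bvalid x ->
  fpath (bsrc x) (btake n x) /\ frange (bsrc x) (btake n x) = bsrc (bdrop n x).
Proof.
  destruct x as [vx m | f]; simpl; intro V.
  - rewrite <- (firstn_skipn n m), fpath_app in V. tauto.
  - destruct (ipath_seq f V n 0) as [P R]. now rewrite Nat.add_0_r in R.
Qed.

Lemma bcat_eq_split vb b x vb' b' x' :
  bvalid x -> frange vb b = bsrc x -> frange vb' b' = bsrc x' ->
  bcat vb b x = bcat vb' b' x' -> (length b <= length b')%nat ->
  exists p, x = bcat (bsrc x) p x' /\ length b' = (length b + length p)%nat /\
            fpath (bsrc x) p /\ frange (bsrc x) p = bsrc x'.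
Proof.
  intros V Hb Hb' Heq Hle.
  set (d := (length b' - length b)%nat).
  assert (Hx' : x' = bdrop d x).
  { rewrite <- (bdrop_bcat vb b x d Hb), Heq.
    replace (length b + d)%nat with (length b' + 0)%nat by lia.
    rewrite (bdrop_bcat vb' b' x' 0 Hb'). symmetry. apply bdrop0. }
  exists (btake d x). rewrite Hx', bcat_btake_bdrop. split; [reflexivity|].
  split; [|apply btake_fpath, V].
  destruct x as [vx m | f]; simpl.
  - destruct x' as [vx' m' | f']; simpl in Heq; [|discriminate].
    injection Heq as _ Heq. apply (f_equal (@length _)) in Heq.
    rewrite !length_app in Heq. rewrite length_firstn. lia.
  - rewrite length_map, length_seq. lia.
Qed.

Lemma in_GE_bcat va a x :
  in_X x -> fpath va a -> frange va a = bsrc x ->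
  in_GE (bcat va a x, Z.of_nat (length a), x).
Proof.
  intros Hx Ha Hax. exists va, a, (bsrc x), [], x.
  rewrite bcat_nil. simpl. rewrite Z.sub_0_r. repeat split; auto.
Qed.

Lemma bcat_edge_inj e1 e2 x :
  bcat (s e1) [e1] x = bcat (s e2) [e2] x -> e1 = e2.
Proof.
  destruct x; simpl; intro H; injection H; [auto|].
  intro Hf. exact (f_equal (fun g => g 0%nat) Hf).
Qed.

(* Either some finite path from v ends at a non-regular vertex, or every vertex reached
   from v is regular and following chosen edges yields an infinite path. *)
Lemma exists_in_X_from v : exists x, in_X x /\ bsrc x = v.
Proof.
  destruct (classic (exists l, fpath v l /\ ~ regular (frange v l))) as [[l Hl]|Hall].
  { now exists (Defs.Fin E0 E1 v l). }
  assert (Hreg : forall l, fpath v l -> regular (frange v l)).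
  { intros l Hl. apply NNPP. intro N. apply Hall. eauto. }
  destruct (proj1 (Hreg [] I)) as [e0 _].
  set (next := fun u => epsilon (inhabits e0) (fun e => s e = u)).
  assert (Hnext : forall u, regular u -> s (next u) = u).
  { intros u [Hu _]. exact (epsilon_spec (inhabits e0) (fun e => s e = u) Hu). }
  set (u := fix u n := match n with O => v | S k => r (next (u k)) end).
  assert (Hu : forall n, regular (u n)).
  { assert (Hreach : forall n, exists l, fpath v l /\ frange v l = u n).
    { induction n as [|n [l [Hl Hlu]]]; [now exists []|].
      exists (l ++ [next (u n)]). rewrite fpath_app, frange_app, Hlu. simpl.
      rewrite Hnext by (rewrite <- Hlu; auto). auto. }
    intro n. destruct (Hreach n) as [l [Hl <-]]. auto. }
  exists (Defs.Inf E0 E1 (fun n => next (u n))). simpl. split.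
  - intro n. symmetry. apply (Hnext (u (S n)) (Hu (S n))).
  - apply (Hnext v (Hu 0%nat)).
Qed.

Section InDegreeAtMostOne.
Hypothesis in_degree_le1 : forall v e1 e2, r e1 = v -> r e2 = v -> e1 = e2.

Lemma fpath_eq_of_frange va a vb b :
  fpath va a -> fpath vb b -> frange va a = frange vb b -> length a = length b ->
  va = vb /\ a = b.
Proof.
  revert va vb b. induction a as [|e a IH]; intros va vb [|e' b] Ha Hb Hr Hl;
    simpl in *; try discriminate; auto.
  destruct Ha as [<- Ha], Hb as [<- Hb].
  destruct (IH _ _ b Ha Hb Hr ltac:(lia)) as [Hee' ->].
  now rewrite (in_degree_le1 _ e e' Hee' eq_refl).
Qed.

Lemma bcat_eq_of_same_domain va a vb b x va' a' vb' b' x' :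
  fpath va a -> in_X x -> frange va a = bsrc x -> frange vb b = bsrc x ->
  fpath va' a' -> frange va' a' = bsrc x' -> frange vb' b' = bsrc x' ->
  bcat vb b x = bcat vb' b' x' ->
  (Z.of_nat (length a) - Z.of_nat (length b) = Z.of_nat (length a') - Z.of_nat (length b'))%Z ->
  (length b <= length b')%nat ->
  bcat va a x = bcat va' a' x'.
Proof.
  intros Ha Hx Hax Hbx Ha' Hax' Hbx' Hdom Hdeg Hle.
  destruct (bcat_eq_split vb b x vb' b' x' (in_X_bvalid x Hx) Hbx Hbx' Hdom Hle)
    as (p & Hxp & Hlen & Hp & Hpx').
  rewrite Hxp, bcat_app.
  destruct (fpath_eq_of_frange va (a ++ p) va' a') as [-> ->]; auto.
  - apply fpath_app. now rewrite Hax.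
  - now rewrite frange_app, Hax, Hpx', Hax'.
  - rewrite length_app. lia.
Qed.

End InDegreeAtMostOne.

End BoundaryPaths.

Theorem mainTheorem16 (E0 E1 : Type) (r s : E1 -> E0) :
  star_injective (in_X E0 E1 r s) (in_GE E0 E1 r s) (@GE_dom E0 E1) (@wtilde E0 E1)
  <-> (forall (v : E0) (e1 e2 : E1), r e1 = v -> r e2 = v -> e1 = e2).
Proof.
  split.
  - intros Hinj v e1 e2 H1 H2.
    destruct (exists_in_X_from E0 E1 r s v) as [x [Hx Hxv]].
    assert (Hmor : forall e, r e = v -> in_GE E0 E1 r s (bcat E0 E1 (s e) [e] x, 1%Z, x)).
    { intros e He. apply (in_GE_bcat E0 E1 r s); simpl; auto. congruence. }
    apply (bcat_edge_inj E0 E1 s _ _ x).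
    assert (Heq := Hinj x Hx _ _ (Hmor e1 H1) (Hmor e2 H2) eq_refl eq_refl eq_refl).
    now injection Heq.
  - intros Hin x _ g h Hg Hh <- Hdom Hdeg.
    destruct Hg as (va & a & vb & b & z & Ha & Hb & Hz & Haz & Hbz & ->).
    destruct Hh as (va' & a' & vb' & b' & z' & Ha' & Hb' & Hz' & Haz' & Hbz' & ->).
    unfold GE_dom, wtilde in *; simpl in *. rewrite Hdeg, Hdom.
    destruct (Nat.le_ge_cases (length b) (length b')).
    + erewrite (bcat_eq_of_same_domain E0 E1 r s Hin va a vb b z va' a' vb' b' z'); eauto.
    + erewrite (bcat_eq_of_same_domain E0 E1 r s Hin va' a' vb' b' z' va a vb b z); eauto.
Qed.
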